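(* Let $p=(p_1,\dots,p_K)$ be a probability vector with $p_j>0$ for all $j$, and let $q^1,\dots,q^b$ be probability vectors on $\{1,\dots,K\}$ (so $q^\ell_j\in[0,1]$). Then $$\sum_{j=1}^K\frac{p_j}{1-(1-p_j)(1-q^1_j)\cdots(1-q^b_j)}\le\sum_{j=1}^K\frac{p_j}{p_j+q^1_j+q^2_j+\cdots+q^b_j}+1.$$
   Context: In the paper, $p$ is the agent's arm-selection distribution (positive in every coordinate under the algorithm) and $q^\ell$ the distribution of neighbor $\ell$. *)

From mathcomp Require Import all_boot all_order all_algebra.
Set Implicit Arguments. Unset Strict Implicit. Unset Printing Implicit Defensive.
Import Order.TTheory GRing.Theory Num.Theory.
Local Open Scope ring_scope.

Definition prob_vec (R : realFieldType) (K : nat) (v : 'I_K -> R) : Prop :=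
  (forall j, 0 <= v j) /\ \sum_(j < K) v j = 1.

(* For a fixed arm j write P for the product of the (1 - q^l_j) and s for the
   sum of the q^l_j.  Weierstrass' product inequality P * (1 + s) <= 1 gives
   1 - (1 - p_j) P >= (p_j + s) / (1 + s), hence the j-th term on the left is
   at most p_j (1 + s) / (p_j + s) = p_j / (p_j + s) + p_j s / (p_j + s), whose
   excess over the j-th term on the right is at most p_j.  These excesses sum
   to 1. *)

From mathcomp Require Import all_boot all_order all_algebra.
From mathcomp Require Import ring lra.
Import Order.TTheory GRing.Theory Num.Theory.
Local Open Scope ring_scope.

Section RealFieldInequalities.

Context {R : realFieldType}.

Lemma prob_vec_le1 {K : nat} {v : 'I_K -> R} :
  prob_vec v -> forall j, 0 <= v j <= 1.
Proof.
move=> [v_ge0 v_sum1] j; rewrite v_ge0 -v_sum1 (bigD1 j) //= lerDl.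
exact: sumr_ge0.
Qed.

Lemma prod1B_ge0 (I : Type) (r : seq I) (x : I -> R) :
  (forall i, x i <= 1) -> 0 <= \prod_(i <- r) (1 - x i).
Proof. by move=> x_le1; apply: prodr_ge0 => i _; rewrite subr_ge0. Qed.

Lemma prod1B_mul1D_le1 (I : Type) (r : seq I) (x : I -> R) :
  (forall i, 0 <= x i <= 1) ->
  (\prod_(i <- r) (1 - x i)) * (1 + \sum_(i <- r) x i) <= 1.
Proof.
move=> x01; elim: r => [|a r IH]; first by rewrite !big_nil addr0 mulr1.
rewrite !big_cons.
set P := \prod_(i <- r) _ in IH *; set s := \sum_(i <- r) _ in IH *.
have P_ge0 : 0 <= P by apply: prod1B_ge0 => i; have /andP[] := x01 i.
have s_ge0 : 0 <= s by apply: sumr_ge0 => i _; have /andP[] := x01 i.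
have /andP[a_ge0 _] := x01 a.
have -> : (1 - x a) * P * (1 + (x a + s)) = P * (1 + s) - P * (x a * (x a + s))
  by ring.
by rewrite lerBDr (le_trans IH) // lerDl !mulr_ge0 // addr_ge0.
Qed.

Lemma div_1BM_le (p P s : R) :
  0 < p -> p <= 1 -> 0 <= P -> 0 <= s -> P * (1 + s) <= 1 ->
  p / (1 - (1 - p) * P) <= p / (p + s) + p.
Proof.
move=> p_gt0 p_le1 P_ge0 s_ge0 Ps_le1.
set D := 1 - (1 - p) * P.
have ps_le_D : p + s <= D * (1 + s) by rewrite /D; nra.
have D_gt0 : 0 < D by nra.
have ps_gt0 : 0 < p + s by lra.
apply: (@le_trans _ _ (p * (1 + s) / (p + s))).
  rewrite ler_pdivrMr // mulrAC ler_pdivlMr // -mulrA ler_pM2l //.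
  by rewrite mulrC.
rewrite mulrDr mulr1 mulrDl lerD2l -mulrA ler_piMr ?(ltW p_gt0) //.
by rewrite ler_pdivrMr // mul1r lerDr ltW.
Qed.

End RealFieldInequalities.

Theorem mainTheorem6 (R : realFieldType) (K b : nat)
  (p : 'I_K -> R) (q : 'I_b -> 'I_K -> R) :
  prob_vec p -> (forall j, 0 < p j) ->
  (forall l, prob_vec (q l)) ->
  \sum_(j < K) p j / (1 - (1 - p j) * \prod_(l < b) (1 - q l j))
  <= \sum_(j < K) p j / (p j + \sum_(l < b) q l j) + 1.
Proof.
move=> p_prob p_gt0 q_prob.
case: (p_prob) => _ p_sum1.
rewrite -[X in _ <= _ + X]p_sum1 -big_split /=; apply: ler_sum => j _.
have q01 l : 0 <= q l j <= 1 by exact: prob_vec_le1.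
have /andP[_ pj_le1] := prob_vec_le1 p_prob j.
apply: div_1BM_le => //.
- by apply: prod1B_ge0 => l; have /andP[] := q01 l.
- by apply: sumr_ge0 => l _; have /andP[] := q01 l.
- exact: prod1B_mul1D_le1.
Qed.
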